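(* For disjunctive guarded systems of type $(A,B)$ and every LTL formula without the next operator $h(A,B_1)$: for all $n\ge1$, if $(A,B)^{(1,n)}\models\mathsf E_{uncond}\,h(A,B_1)$ then $(A,B)^{(1,n+1)}\models\mathsf E_{uncond}\,h(A,B_1)$.
   Context: A process template is $U=(Q_U,\mathit{init}_U,\Sigma_U,\delta_U)$ with finite states $Q_U$, initial state $\mathit{init}_U$, finite input alphabet $\Sigma_U$ and guarded transitions $\delta_U\subseteq Q_U\times\Sigma_U\times 2^{Q_A\cup Q_B}\times Q_U$; templates $A,B$ have disjoint state sets and disjoint alphabets, and $|B|=|Q_B|$. The system $(A,B)^{(1,n)}$ consists of one copy of $A$ and $n$ copies $B_1,\dots,B_n$ of $B$; a global state $s$ gives each process a local state, a global input $e$ gives each process an input letter, and initially all processes are in their initial states. In a disjunctive system a guard $g$ is satisfied for process $p$ in $s$ iff some process $p'\ne p$ has $s(p')\in g$. A local transition $(q,\sigma,g,q')$ of $p$ is enabled for $(s,e)$ if $s(p)=q$, $e(p)=\sigma$ and $g$ is satisfied for $p$ in $s$; a global step changes the state of exactly one process along an enabled transition. A path is a sequence of configurations $(s_1,e_1,p_1),(s_2,e_2,p_2),\dots$ where $p_t$ makes the step from $s_t$ to $s_{t+1}$ under $e_t$, a configuration $(s,e,\bot)$ occurs (as the last one) exactly when all processes are disabled, and $e_{t+1}(p)=e_t(p)$ for every process $p$ not moving at moment $t$. A run is a maximal path from the initial state. A run is unconditionally fair if it is infinite and every process moves infinitely often. For an LTL formula $h(A,B_1)$ without next operator over atomic propositions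 from $Q_A\cup\Sigma_A$ and $(Q_B\cup\Sigma_B)\times\{1\}$ (interpreted on the local states and inputs of $A$ and $B_1$), $(A,B)^{(1,n)}\models\mathsf E_{uncond}\,h(A,B_1)$ means some unconditionally fair run satisfies $h$. *)

From mathcomp Require Import all_boot.
Set Implicit Arguments. Unset Strict Implicit. Unset Printing Implicit Defensive.

(* Templates A and B have state sets
   QA, QB and alphabets SA, SB (finite types, disjoint by construction since
   guards range over the sum type QA + QB). *)

Section System.
Variables (QA QB SA SB : finType).

Definition guard := {set (QA + QB)}.
Definition transA := {set (QA * SA * guard * QA)}.
Definition transB := {set (QB * SB * guard * QB)}.

(* processes of (A,B)^(1,n): None = the copy of A, Some i = B_(i+1) *)
Definition proc (n : nat) := option 'I_n.
Definition gstate (n : nat) := (QA * {ffun 'I_n -> QB})%type.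
Definition ginput (n : nat) := (SA * {ffun 'I_n -> SB})%type.

Definition init_gstate (n : nat) (iA : QA) (iB : QB) : gstate n :=
  (iA, [ffun _ => iB]).

Definition loc n (s : gstate n) (p : proc n) : QA + QB :=
  match p with None => inl s.1 | Some i => inr (s.2 i) end.

Definition guard_sat n (g : guard) (s : gstate n) (p : proc n) : Prop :=
  exists p' : proc n, p' <> p /\ loc s p' \in g.

Definition gstep (dA : transA) (dB : transB) n
    (s : gstate n) (e : ginput n) (p : proc n) (s' : gstate n) : Prop :=
  match p with
  | None => exists (g : guard) (q' : QA),
      (s.1, e.1, g, q') \in dA /\ guard_sat g s None /\ s' = (q', s.2)
  | Some i => exists (g : guard) (q' : QB),
      (s.2 i, e.2 i, g, q') \in dB /\ guard_sat g s (Some i) /\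
      s' = (s.1, [ffun j => if j == i then q' else s.2 j])
  end.

Definition inp_eq n (e e' : ginput n) (p : proc n) : Prop :=
  match p with None => e.1 = e'.1 | Some i => e.2 i = e'.2 i end.

(* an infinite path from the initial state (hence a run, being maximal) *)
Definition infinite_run (iA : QA) (dA : transA) (iB : QB) (dB : transB) n
    (s : nat -> gstate n) (e : nat -> ginput n) (p : nat -> proc n) : Prop :=
  s 0 = init_gstate n iA iB /\
  (forall t, gstep dA dB (s t) (e t) (p t) (s t.+1)) /\
  (forall t (q : proc n), q <> p t -> inp_eq (e t.+1) (e t) q).

Definition uncond_fair n (p : nat -> proc n) : Prop :=
  forall (q : proc n) (t : nat), exists t', t <= t' /\ p t' = q.

Inductive atom :=
| AtQA of QA | AtSA of SA | AtQB1 of QB | AtSB1 of SB.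

Inductive ltl :=
| LTrue
| LAtom of atom
| LNot of ltl
| LAnd of ltl & ltl
| LUntil of ltl & ltl.

(* a letter: local state and input of A and of B_1 *)
Definition letter := (QA * SA * QB * SB)%type.

Definition atom_holds (a : atom) (l : letter) : Prop :=
  match a with
  | AtQA q => l.1.1.1 = q
  | AtSA x => l.1.1.2 = x
  | AtQB1 q => l.1.2 = q
  | AtSB1 x => l.2 = x
  end.

Fixpoint ltl_sat (w : nat -> letter) (i : nat) (f : ltl) : Prop :=
  match f with
  | LTrue => True
  | LAtom a => atom_holds a (w i)
  | LNot f1 => ~ ltl_sat w i f1
  | LAnd f1 f2 => ltl_sat w i f1 /\ ltl_sat w i f2
  | LUntil f1 f2 => exists j, i <= j /\ ltl_sat w j f2 /\
                      (forall k, i <= k < j -> ltl_sat w k f1)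
  end.

(* the trace of A and B_1 (= index ord0) along a run of (A,B)^(1,n.+1) *)
Definition trace_AB1 n (s : nat -> gstate n.+1) (e : nat -> ginput n.+1)
  : nat -> letter :=
  fun t => ((s t).1, (e t).1, (s t).2 ord0, (e t).2 ord0).

Definition E_uncond (iA : QA) (dA : transA) (iB : QB) (dB : transB)
    (n : nat) (h : ltl) : Prop :=
  exists (s : nat -> gstate n.+1) (e : nat -> ginput n.+1)
         (p : nat -> proc n.+1),
    infinite_run iA dA iB dB s e p /\ uncond_fair p /\
    ltl_sat (trace_AB1 s e) 0 h.

End System.

From mathcomp Require Import all_boot.
From Corelib Require Import Setoid.
Set Implicit Arguments. Unset Strict Implicit. Unset Printing Implicit Defensive.

(* Add to a run of (A,B)^(1,n+1) a new copy of B that shadows B_1: every move of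
   B_1 is immediately replayed by the copy.  Guards are disjunctive, so the old
   processes keep every witness they had, and the copy's replay is enabled by the
   witness of B_1's move, which has not moved in between.  The copy moves
   whenever B_1 does, so the new run is unconditionally fair, and the trace of
   A and B_1 is only stuttered, which LTL without next cannot observe. *)

Lemma first_preimage (f : nat -> nat) :
  {homo f : a b / a <= b} -> (forall y, exists k, f k = y) ->
  forall m y, f m <= y ->
  exists k, [/\ m <= k, f k = y & forall j, m <= j < k -> f j < y].
Proof.
move=> f_mono f_surj m y le_fm_y.
have ex_k : exists k, (m <= k) && (f k == y).
  have [M fM] := f_surj y.
  case: (leqP m M) => [le_mM | /ltnW le_Mm]; first by exists M; rewrite le_mM fM eqxx.
  by exists m; rewrite leqnn eqn_leq le_fm_y -fM f_mono.
have [k /andP[le_mk /eqP fk] k_min] := ex_minnP ex_k.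
exists k; split; [exact: le_mk | exact: fk | move=> j /andP[le_mj lt_jk]].
rewrite ltn_neqAle -fk f_mono ?(ltnW lt_jk) // andbT.
by apply: contraL lt_jk => /eqP fj; rewrite -leqNgt; apply: k_min; rewrite le_mj fj fk eqxx.
Qed.


Lemma ltl_sat_stutter (QA QB SA SB : finType) (w w' : nat -> letter QA QB SA SB)
    (f : nat -> nat) :
  {homo f : a b / a <= b} -> (forall y, exists k, f k = y) ->
  (forall m, w' m = w (f m)) ->
  forall phi m, ltl_sat w' m phi <-> ltl_sat w (f m) phi.
Proof.
move=> f_mono f_surj w'E.
elim=> [|a|phi IH|phi1 IH1 phi2 IH2|phi1 IH1 phi2 IH2] m /=.
- by [].
- by rewrite w'E.
- by rewrite IH.
- by rewrite IH1 IH2.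
split.
- move=> [j [le_mj [sat2 sat1]]]; exists (f j); split; first exact: f_mono.
  split=> [|k' /andP[le_k' lt_k']]; first by rewrite -IH2.
  have [k [le_mk fk _]] := first_preimage f_mono f_surj le_k'.
  rewrite -fk -IH1; apply: sat1; rewrite le_mk ltnNge /=.
  by apply: contraL lt_k' => /f_mono; rewrite fk -leqNgt.
- move=> [j' [le_j' [sat2 sat1]]].
  have [k [le_mk fk below]] := first_preimage f_mono f_surj le_j'.
  exists k; split; first exact: le_mk.
  split=> [|j /andP[le_mj lt_jk]]; first by rewrite IH2 fk.
  by rewrite IH1; apply: sat1; rewrite f_mono ?below ?le_mj.
Qed.
Definition extend_global (X Y : Type) n (u : X * {ffun 'I_n -> Y}) (y : Y)
  : X * {ffun 'I_n.+1 -> Y} :=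
  (u.1, [ffun j => oapp u.2 y (unlift ord_max j)]).

Lemma extend_global_lift (X Y : Type) n (u : X * {ffun 'I_n -> Y}) y j :
  (extend_global u y).2 (lift ord_max j) = u.2 j.
Proof. by rewrite ffunE liftK. Qed.

Lemma extend_global_max (X Y : Type) n (u : X * {ffun 'I_n -> Y}) y :
  (extend_global u y).2 ord_max = y.
Proof. by rewrite ffunE unlift_none. Qed.

Definition lift_proc n (p : proc n) : proc n.+1 := omap (lift ord_max) p.

Lemma lift_proc_inj n : injective (@lift_proc n).
Proof. by case=> [i|] [j|] //= /Some_inj ij; congr Some; exact: lift_inj ij. Qed.

Lemma lift_proc_neq_max n (p : proc n) : lift_proc p <> Some ord_max.
Proof. by case: p => //= i /Some_inj/eqP; rewrite eq_sym (negbTE (neq_lift _ _)). Qed.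

Variant lift_proc_spec n : proc n.+1 -> Type :=
  | LiftProc p : lift_proc_spec (lift_proc p)
  | NewProc : lift_proc_spec (Some ord_max).

Lemma lift_procP n (q : proc n.+1) : lift_proc_spec q.
Proof.
case: q => [j|]; last exact: (LiftProc None).
by case: (unliftP ord_max j) => [j'|] ->; [exact: (LiftProc (Some j')) | exact: NewProc].
Qed.

Lemma lift_max_ord0 n : lift ord_max (ord0 : 'I_n.+1) = ord0 :> 'I_n.+2.
Proof. exact: val_inj. Qed.

Section Extension.
Variables (QA QB SA SB : finType) (dA : transA QA QB SA) (dB : transB QA QB SB).
Variable n : nat.
Implicit Types (s : gstate QA QB n) (e : ginput SA SB n).

Lemma loc_extend_lift s q p : loc (extend_global s q) (lift_proc p) = loc s p.
Proof. by case: p => //= j; rewrite extend_global_lift. Qed.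

Lemma extend_init (iA : QA) (iB : QB) :
  extend_global (init_gstate n iA iB) iB = init_gstate n.+1 iA iB.
Proof.
congr pair; apply/ffunP => j; rewrite !ffunE.
by case: unlift => //= j'; rewrite ffunE.
Qed.

Lemma gstep_frame s e p s' p' :
  gstep dA dB s e p s' -> p' <> p -> loc s' p' = loc s p'.
Proof.
case: p => [i|] [g [q' [_ [_ ->]]]]; case: p' => [j|] //= ne_ji.
by rewrite ffunE; case: eqP => // ji; case: ne_ji; rewrite ji.
Qed.

Lemma guard_sat_extend g s q p :
  guard_sat g s p -> guard_sat g (extend_global s q) (lift_proc p).
Proof.
move=> [p' [ne_p'p l_p']]; exists (lift_proc p'); split.
- by move/lift_proc_inj.
- by rewrite loc_extend_lift.
Qed.

Lemma gstep_extend s e p s' q x :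
  gstep dA dB s e p s' ->
  gstep dA dB (extend_global s q) (extend_global e x) (lift_proc p)
    (extend_global s' q).
Proof.
case: p => [i|] [g [q' [d [sat ->]]]]; exists g, q'.
- split; first by rewrite /= !extend_global_lift.
  split; first exact (guard_sat_extend q sat).
  congr pair; apply/ffunP => j; rewrite !ffunE.
  case: (unliftP ord_max j) => [j'|] -> /=.
  + by rewrite (inj_eq lift_inj) ffunE.
  + by rewrite (negbTE (neq_lift _ _)).
- by split; [| split; [exact (guard_sat_extend q sat) |]].
Qed.

Lemma gstep_copy s e i s' e' :
  gstep dA dB s e (Some i) s' ->
  gstep dA dB (extend_global s' (s.2 i)) (extend_global e' (e.2 i))
    (Some ord_max) (extend_global s' (s'.2 i)).
Proof.
move=> step; have [g [q' [d [[p' [ne_p' l_p']] s'E]]]] := step.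
exists g, q'; split; first by rewrite /= !extend_global_max.
split.
- exists (lift_proc p'); split; first exact: lift_proc_neq_max.
  by rewrite loc_extend_lift (gstep_frame step ne_p').
- congr pair; apply/ffunP => j; rewrite !ffunE.
  case: (unliftP ord_max j) => [j'|] -> /=.
  + by rewrite eq_sym (negbTE (neq_lift _ _)).
  + by rewrite eqxx s'E ffunE eqxx.
Qed.

Lemma inp_eq_extend_lift e e' x x' p :
  inp_eq (extend_global e x) (extend_global e' x') (lift_proc p) <-> inp_eq e e' p.
Proof. by case: p => //= j; rewrite !extend_global_lift. Qed.

Lemma inp_eq_extend_max e e' x x' :
  inp_eq (extend_global e x) (extend_global e' x') (Some ord_max) <-> x = x'.
Proof. by rewrite /= !extend_global_max. Qed.

End Extension.
Section Shadow.
Variables (n : nat) (i : 'I_n) (p : nat -> proc n).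

(* [(t, false)]: the original step [t] is next.  [(t, true)]: B_i has just made
   step [t] and the shadow copy replays it next. *)
Fixpoint shadow_sched m : nat * bool :=
  if m is m'.+1 then
    let: (t, replay) := shadow_sched m' in
    if replay then (t.+1, false)
    else if p t == Some i then (t, true) else (t.+1, false)
  else (0, false).

Definition shadow_clock m := (shadow_sched m).1 + (shadow_sched m).2.

Definition shadow_proc m : proc n.+1 :=
  let: (t, replay) := shadow_sched m in
  if replay then Some ord_max else lift_proc (p t).

Definition shadow_seq (X Y : Type) (u : nat -> X * {ffun 'I_n -> Y}) m :=
  let: (t, replay) := shadow_sched m in
  extend_global (u (t + replay)) ((u t).2 i).

Lemma shadow_sched_replay m t : shadow_sched m = (t, true) -> p t = Some i.
Proof.
case: m => //= m; case: (shadow_sched m) => t0 [] //.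
by case: eqP => // pt0 [<-].
Qed.

Lemma shadow_sched_reach t : exists m, t <= m /\ shadow_sched m = (t, false).
Proof.
elim: t => [|t [m [le_tm sm]]]; first by exists 0.
case pt: (p t == Some i).
- by exists m.+2; rewrite /= sm pt ltnS leqW.
- by exists m.+1; rewrite /= sm pt ltnS.
Qed.

Lemma shadow_clock_mono : {homo shadow_clock : a b / a <= b}.
Proof.
apply: (homo_leq leqnn leq_trans) => m.
rewrite /shadow_clock /=; case: (shadow_sched m) => t [] /=.
- by rewrite addn0 addn1.
- by case: eqP => _ /=; rewrite !addn0 ?addn1 leqnSn.
Qed.

Lemma shadow_clock_surj t : exists m, shadow_clock m = t.
Proof.
have [m [_ sm]] := shadow_sched_reach t.
by exists m; rewrite /shadow_clock sm addn0.
Qed.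

Section Seq.
Variables (X Y : Type) (u : nat -> X * {ffun 'I_n -> Y}).

Lemma shadow_seq_fst m : (shadow_seq u m).1 = (u (shadow_clock m)).1.
Proof. by rewrite /shadow_seq /shadow_clock; case: shadow_sched. Qed.

Lemma shadow_seq_lift m j :
  (shadow_seq u m).2 (lift ord_max j) = (u (shadow_clock m)).2 j.
Proof.
by rewrite /shadow_seq /shadow_clock; case: shadow_sched => t b; rewrite extend_global_lift.
Qed.

Lemma shadow_seq_idle m t :
  shadow_sched m = (t, false) -> shadow_seq u m = extend_global (u t) ((u t).2 i).
Proof. by rewrite /shadow_seq => ->; rewrite addn0. Qed.

Lemma shadow_seq_next m t :
  shadow_sched m = (t, false) -> (Some i <> p t -> (u t.+1).2 i = (u t).2 i) ->
  shadow_seq u m.+1 = extend_global (u t.+1) ((u t).2 i).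
Proof.
rewrite /shadow_seq /= => -> u_i.
by case: eqP => [_ | /nesym /u_i ->] /=; rewrite ?addn0 ?addn1.
Qed.

Lemma shadow_seq_replay m t :
  shadow_sched m = (t, true) ->
  shadow_seq u m = extend_global (u t.+1) ((u t).2 i) /\
  shadow_seq u m.+1 = extend_global (u t.+1) ((u t.+1).2 i).
Proof. by rewrite /shadow_seq /= => ->; rewrite /= addn0 addn1. Qed.

End Seq.

Section Run.
Variables (QA QB SA SB : finType).
Variables (iA : QA) (dA : transA QA QB SA) (iB : QB) (dB : transB QA QB SB).
Variables (s : nat -> gstate QA QB n) (e : nat -> ginput SA SB n).
Hypothesis run : infinite_run iA dA iB dB s e p.

Lemma shadow_step m :
  gstep dA dB (shadow_seq s m) (shadow_seq e m) (shadow_proc m) (shadow_seq s m.+1).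
Proof.
have [_ [step inp]] := run.
rewrite /shadow_proc; case sm: (shadow_sched m) => [t []].
- have [-> ->] := shadow_seq_replay s sm; have [-> _] := shadow_seq_replay e sm.
  by apply: gstep_copy; rewrite -(shadow_sched_replay sm).
- rewrite (shadow_seq_idle s sm) (shadow_seq_idle e sm) (shadow_seq_next (u:=s) sm).
    exact: gstep_extend.
  by move=> /(gstep_frame (step t)) [].
Qed.

Lemma shadow_inputs m q :
  q <> shadow_proc m -> inp_eq (shadow_seq e m.+1) (shadow_seq e m) q.
Proof.
have [_ [_ inp]] := run.
rewrite /shadow_proc; case sm: (shadow_sched m) => [t []] ne_q.
- have [-> ->] := shadow_seq_replay e sm.
  by case: (lift_procP q) ne_q => [q0 _|//]; apply/inp_eq_extend_lift; case: q0.
- rewrite (shadow_seq_idle e sm) (shadow_seq_next (u:=e) sm); last exact: inp.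
  case: (lift_procP q) ne_q => [q0 ne_q0|_]; last exact/inp_eq_extend_max.
  by apply/inp_eq_extend_lift/inp => pt; apply: ne_q0; rewrite pt.
Qed.

Lemma shadow_run : infinite_run iA dA iB dB (shadow_seq s) (shadow_seq e) shadow_proc.
Proof.
have [s0 _] := run; split; last by split; [exact: shadow_step | exact: shadow_inputs].
by rewrite (shadow_seq_idle s (erefl : shadow_sched 0 = _)) s0 ffunE extend_init.
Qed.

End Run.

Lemma shadow_fair : uncond_fair p -> uncond_fair shadow_proc.
Proof.
move=> fair q t0; case: (lift_procP q) => [q0|].
- have [t1 [le_t01 pt1]] := fair q0 t0; have [m [le_t1m sm]] := shadow_sched_reach t1.
  by exists m; rewrite /shadow_proc sm pt1 (leq_trans le_t01).
- have [t1 [le_t01 pt1]] := fair (Some i) t0; have [m [le_t1m sm]] := shadow_sched_reach t1.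
  exists m.+1; rewrite /shadow_proc /= sm pt1 eqxx.
  by rewrite (leq_trans le_t01) // (leq_trans le_t1m).
Qed.

End Shadow.

Theorem mainTheorem6 (QA QB SA SB : finType)
    (initA : QA) (deltaA : transA QA QB SA) (initB : QB) (deltaB : transB QA QB SB)
    (h : ltl QA QB SA SB) (n : nat) :
  E_uncond initA deltaA initB deltaB n h ->
  E_uncond initA deltaA initB deltaB n.+1 h.
Proof.
move=> [s [e [p [run [fair sat]]]]].
exists (shadow_seq ord0 p s), (shadow_seq ord0 p e), (shadow_proc ord0 p).
split; first exact: shadow_run.
split; first exact: shadow_fair.
have trace_stutter m :
    trace_AB1 (shadow_seq ord0 p s) (shadow_seq ord0 p e) m =
    trace_AB1 s e (shadow_clock ord0 p m).
  by rewrite /trace_AB1 -lift_max_ord0 !shadow_seq_lift !shadow_seq_fst.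
exact/(ltl_sat_stutter (shadow_clock_mono _ _) (shadow_clock_surj _ _) trace_stutter).
Qed.
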